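(* Let $X$ be a Hausdorff space and $D\subseteq X$ a dense subset. If $D^{\mathfrak c}$ is relatively countably compact in $X^{\mathfrak c}$, then $[D]^{<\omega}\setminus\{\emptyset\}$ is relatively countably compact in $\operatorname{CL}(X)$ and $\operatorname{CL}(X)$ is pseudocompact.
   Context: A subset $Y$ of a space $Z$ is relatively countably compact in $Z$ if every countably infinite subset of $Y$ has an accumulation point in $Z$. $[D]^{<\omega}$ is the set of finite subsets of $D$ (nonempty finite subsets of a $T_1$ space are closed, hence points of $\operatorname{CL}(X)$). $\operatorname{CL}(X)$ is the set of nonempty closed subsets of $X$ with the Vietoris topology, generated by $A^+=\{F:F\subseteq A\}$ and $A^-=\{F:F\cap A\ne\emptyset\}$ for open $A\subseteq X$. Powers carry the product topology. Pseudocompact means every continuous real-valued function is bounded. *)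

From HB Require Import structures.
From mathcomp Require Import all_boot all_order all_algebra.
From mathcomp Require Import all_classical all_reals all_analysis.
From mathcomp Require Import Rstruct Rstruct_topology.
Set Implicit Arguments. Unset Strict Implicit. Unset Printing Implicit Defensive.
Import Order.TTheory GRing.Theory Num.Theory.
Local Open Scope classical_set_scope.
Local Open Scope ring_scope.

Definition rel_countably_compact (T : topologicalType) (Y : set T) : Prop :=
  forall Z : set T, Z `<=` Y -> (Z #= [set: nat])%card ->
    exists x : T, limit_point Z x.

Definition pseudocompact (T : topologicalType) : Prop :=
  forall f : T -> Rdefinitions.R, continuous f ->
    exists M : Rdefinitions.R, forall t, `|f t| <= M.

Record CL (X : topologicalType) := MkCL {
  CLset :> set X ;
  CLsetP : closed CLset /\ CLset !=set0 }.

HB.instance Definition _ (X : topologicalType) := gen_eqMixin (CL X).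
HB.instance Definition _ (X : topologicalType) := gen_choiceMixin (CL X).

(** Index type of the Vietoris subbase: (true, A) ~ A^+, (false, A) ~ A^-. *)
Definition vietoris_index (X : topologicalType) := (bool * set X)%type.
HB.instance Definition _ (X : topologicalType) :=
  gen_eqMixin (vietoris_index X).
HB.instance Definition _ (X : topologicalType) :=
  gen_choiceMixin (vietoris_index X).
HB.instance Definition _ (X : topologicalType) :=
  isPointed.Build (vietoris_index X) (true, setT).

Definition vietoris_subbase (X : topologicalType) (i : vietoris_index X)
  : set (CL X) :=
  if i.1 then [set F : CL X | (F : set X) `<=` i.2]
  else [set F : CL X | (F : set X) `&` i.2 !=set0].

Definition vietoris_dom (X : topologicalType) : set (vietoris_index X) :=
  [set i | open i.2].

HB.instance Definition _ (X : topologicalType) :=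
  isSubBaseTopological.Build (CL X) (@vietoris_dom X) (@vietoris_subbase X).

(** D^c as a subset of X^c, with c = |nat -> bool| = continuum,
    X^c carrying the product topology. *)
Definition power_set_c (X : topologicalType) (D : set X)
  : set {ptws (nat -> bool) -> X} :=
  [set f | forall i, D (f i)].

Definition fin_nonempty_subsets (X : topologicalType) (D : set X)
  : set (CL X) :=
  [set F : CL X | finite_set (F : set X) /\ (F : set X) `<=` D].

From HB Require Import structures.
From mathcomp Require Import all_boot all_order all_algebra.
From mathcomp Require Import all_classical all_reals all_analysis.
From mathcomp Require Import Rstruct Rstruct_topology finmap lra.
Set Implicit Arguments. Unset Strict Implicit. Unset Printing Implicit Defensive.
Import Order.TTheory GRing.Theory Num.Theory numFieldNormedType.Exports.
Local Open Scope classical_set_scope.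

(** Coordinates of X^c are indexed by codes i : nat -> bool of sequences of
    naturals, so a sequence (F n) of nonempty finite subsets of D yields
    points x n of D^c such that x n i lies in F n and every choice of one
    point in each F n is a coordinate of the x n.  If q is an accumulation
    point of the x n, then G = cl{q i | i} is an accumulation point of the F n
    in CL(X): G ⊆ A forces F n ⊆ A for x n near q, through the coordinate
    choosing points outside A, and G ∩ A ≠ ∅ gives some q i ∈ A.  Finite
    subsets of D are dense in CL(X), and a T1 space with a dense relatively
    countably compact subset is pseudocompact: an unbounded continuous f would
    be unbounded on the dense subset along a sequence without accumulation
    point. *)

Lemma card_eq_nat_enum (T : Type) (Z : set T) : (Z #= [set: nat])%card ->
  exists2 g : nat -> T, injective g & forall n, Z (g n).
Proof.
rewrite card_eq_sym => /card_bijP [f /bij_inj f_inj].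
exists (fun n => val (f (exist _ n (mem_set (I : setT n))))).
  by move=> a b /val_inj/f_inj [].
by move=> n; exact: set_mem (valP (f _)).
Qed.

Lemma dense_nbhs_meets (T : topologicalType) (S : set T) (t : T) (U : set T) :
  dense S -> nbhs t U -> U `&` S !=set0.
Proof.
move=> dS; rewrite nbhsE => -[B [oB Bt] BU].
have [s [Bs Ss]] := dS B (ex_intro _ t Bt) oB.
by exists s; split => //; apply: BU.
Qed.

Lemma limit_point_range_tail (T : topologicalType) (u : nat -> T) (p : T)
    (U : set T) (N : nat) :
  accessible_space T -> limit_point (range u) p -> nbhs p U ->
  exists2 k, (N <= k)%N & U (u k).
Proof.
move=> T1 pu pU.
pose V := u @` `I_N `\ p.
have cV : closed V.
  apply: accessible_finite_set_closed.1 T1 _ _.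
  exact/finite_setD/finite_image/finite_II.
have nVc : nbhs p (~` V).
  by apply: open_nbhs_nbhs; split; [exact: closed_openC | move=> [_]; apply].
have [y [/eqP yp [k _ uky] [Uy Vy]]] := pu _ (filterI pU nVc).
exists k; last by rewrite uky.
rewrite leqNgt; apply/negP => kN.
by apply: Vy; split; [exists k | rewrite -uky in yp *].
Qed.

Lemma nbhs_ptws_coord (X : topologicalType) (I : eqType) (q : {ptws I -> X})
    (i : I) (O : set X) :
  open O -> O (q i) -> nbhs q [set f : {ptws I -> X} | O (f i)].
Proof.
by move=> oO Oqi; apply: (@proj_continuous I (fun=> X) i q);
  apply: open_nbhs_nbhs.
Qed.

Section dense_pseudocompact.
Local Open Scope ring_scope.

Lemma dense_bounded (T : topologicalType) (R : realType) (Y : set T)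
    (f : T -> R) (M : R) :
  dense Y -> continuous f -> (forall y, Y y -> `|f y| <= M) ->
  forall t, `|f t| <= M.
Proof.
move=> dY cf fY t; rewrite leNgt; apply/negP => Mft.
have /(dense_nbhs_meets dY) [y [fty Yy]] :
    nbhs t (f @^-1` ball (f t) (`|f t| - M)).
  by apply: cf; apply: nbhsx_ballx; rewrite subr_gt0.
move: fty (fY y Yy); rewrite /ball /= => fty.
by have := lerB_dist (f t) (f y); lra.
Qed.

Lemma unbounded_step_seq (T : Type) (R : realDomainType) (Y : set T)
    (g : T -> R) :
  (forall r, exists y, Y y /\ r < g y) ->
  exists2 u : nat -> T, forall k, Y (u k) & forall k, g (u k) + 1 < g (u k.+1).
Proof.
move=> /choice [h hh].
pose u k := iter k (fun t => h (g t + 1)) (h 0).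
exists u => [[|k]|k]; [exact: (hh _).1 | exact: (hh _).1 | exact: (hh _).2].
Qed.

Lemma dense_rel_countably_compact_pseudocompact (T : topologicalType)
    (Y : set T) :
  accessible_space T -> dense Y -> rel_countably_compact Y -> pseudocompact T.
Proof.
move=> T1 dY rccY f cf; apply: contrapT => unb.
have [u Yu fu_step] : exists2 u : nat -> T, forall k, Y (u k) &
    forall k, `|f (u k)| + 1 < `|f (u k.+1)|.
  apply: (unbounded_step_seq (g := fun t => `|f t|)) => r.
  apply: contrapT => fY.
  apply: unb; exists r; apply: dense_bounded dY cf _ => y Yy.
  by rewrite leNgt; apply/negP => rfy; apply: fY; exists y.
have fu_lt : {homo (fun k => `|f (u k)|) : i j / (i < j)%N >-> i < j}.
  by apply: Order.NatMonotonyTheory.homo_ltn_lt => k; have := fu_step k; lra.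
have u_inj : injective u.
  move=> i j uij; apply/eqP; rewrite eqn_leq.
  by apply/andP; split; rewrite leqNgt; apply/negP => /fu_lt; rewrite uij ltxx.
have fu_ge k : k%:R <= `|f (u k)|.
  elim: k => [|k IH]; first exact: normr_ge0.
  by have := fu_step k; rewrite -natr1; lra.
have range_uY : range u `<=` Y by move=> _ [k _ <-].
have [p pu] := rccY _ range_uY (inj_card_eq (fun i j _ _ => @u_inj i j)).
have [k kN] := limit_point_range_tail (Num.Def.trunc (`|f p| + 1)).+1 T1 pu
  (cf p _ (nbhsx_ballx (f p) 1 ltr01)).
rewrite /ball /= => fpu; have := truncnS_gt (`|f p| + 1).
rewrite -(ler_nat Rdefinitions.R) in kN.
by have := fu_ge k; have := lerB_dist (f (u k)) (f p); rewrite distrC; lra.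
Qed.
End dense_pseudocompact.

Section vietoris.
Variable X : topologicalType.

Lemma CLset_inj : injective (@CLset X).
Proof.
move=> [A pA] [B pB] /= AB; subst B.
by rewrite (Prop_irrelevance pA pB).
Qed.

Lemma open_vietoris_subbase (i : vietoris_index X) :
  vietoris_dom i -> open (vietoris_subbase i).
Proof.
move=> di; exists [set vietoris_subbase i]; last by rewrite bigcup_set1.
by move=> _ ->; apply: finI_from1.
Qed.

Lemma nbhs_CL_subbase (G : CL X) (V : set (CL X)) : nbhs G V ->
  exists fs : {fset vietoris_index X},
   [/\ forall i, i \in fs -> vietoris_dom i,
       forall i, i \in fs -> vietoris_subbase i G &
       \bigcap_(i in [set` fs]) vietoris_subbase i `<=` V].
Proof.
move=> [B [[DD sDD eB] BG BV]].
move: BG; rewrite -eB => -[C DDC CG].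
have [fs sfs Cfs] := sDD _ DDC.
exists fs; split.
- by move=> i /sfs /set_mem.
- by move=> i ifs; move: CG => /=; rewrite -Cfs; apply.
- by move=> c cf; apply: BV; rewrite -eB; exists C => //=; rewrite -Cfs.
Qed.

Lemma accessible_CL : accessible_space X -> accessible_space (CL X).
Proof.
move=> T1 A B AB.
have [[z [Az nBz]]|AsubB] :=
  pselect (exists z, (A : set X) z /\ ~ (B : set X) z).
  exists (vietoris_subbase (false, ~` (B : set X))); rewrite !in_setE; split.
  - exact/open_vietoris_subbase/closed_openC/(CLsetP B).1.
  - by exists z.
  - by case => w [].
have [z [Bz nAz]] : exists z, (B : set X) z /\ ~ (A : set X) z.
  apply: contrapT => BsubA; move/eqP: AB; apply; apply: CLset_inj.
  apply/seteqP; split => w wP; apply: contrapT => nw.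
  - by apply: AsubB; exists w.
  - by apply: BsubA; exists w.
exists (vietoris_subbase (true, ~` [set z])); rewrite !in_setE; split.
- exact/open_vietoris_subbase/closed_openC/accessible_closed_set1.
- by move=> w Aw /= wz; apply: nAz; rewrite -wz.
- by move/(_ z Bz); apply.
Qed.

Lemma dense_fin_nonempty_subsets (D : set X) :
  accessible_space X -> dense D -> dense (fin_nonempty_subsets D).
Proof.
move=> T1 dD O [t Ot] oO.
have [fs [fs_dom fs_t fs_O]] := nbhs_CL_subbase (open_nbhs_nbhs (conj oO Ot)).
pose U := [set z : X | forall i, i \in fs -> i.1 -> i.2 z].
have nbhs_U z : (t : set X) z -> nbhs z U.
  move=> tz; apply: (@filterS _ _ _ (\bigcap_(i in [set` fs])
      (if i.1 then i.2 else setT))).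
    by move=> w Uw i ifs i1; have := Uw i ifs; rewrite i1.
  apply: filter_bigI => -[[] A] ifs /=; last exact: filterT.
  by apply: open_nbhs_nbhs; split; [exact: fs_dom ifs | exact: fs_t _ ifs _ tz].
have [z0 tz0] := (CLsetP t).2.
have [d0 [Ud0 Dd0]] := dense_nbhs_meets dD (nbhs_U _ tz0).
have witness (i : vietoris_index X) :
    exists y, [/\ D y, U y & i \in fs -> ~~ i.1 -> i.2 y].
  case: i => -[] A; first by exists d0.
  have [ifs|] := boolP ((false, A) \in fs); last by exists d0.
  have [z [tz Az]] := fs_t _ ifs.
  have [y [[Uy Ay] Dy]] := dense_nbhs_meets dD
    (filterI (nbhs_U _ tz) (open_nbhs_nbhs (conj (fs_dom _ ifs) Az))).
  by exists y.
have [d dP] := choice witness.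
pose E := d @` [set` fs] `|` [set d0].
have finE : finite_set E.
  by rewrite finite_setU; split; [exact/finite_image/finite_fset | exact: finite_set1].
have CL_E : closed E /\ E !=set0.
  by split; [exact: accessible_finite_set_closed.1 T1 _ finE | exists d0; right].
exists (MkCL CL_E); split; last by split => //= y [[i _ <-]|->] //; case: (dP i).
apply: fs_O => -[[] A] ifs /=.
- by move=> y [[i _ <-]|->]; [case: (dP i) => _ + _; exact | exact: Ud0].
- exists (d (false, A)); split; first by left; exists (false, A).
  by case: (dP (false, A)) => _ _; apply.
Qed.

End vietoris.

(* [i] codes the sequence whose graph is [[set nk | i (pickle nk)]]; [xget]
   returns the junk value 0 when a fibre is not a singleton. *)
Definition decode (i : nat -> bool) (n : nat) : nat :=
  xget 0%N [set k | i (choice.pickle (n, k))].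

Lemma decode_surj (s : nat -> nat) : exists i, decode i = s.
Proof.
exists (fun p => if choice.unpickle p is Some nk then nk.2 == s nk.1 else false).
apply: funext => n; apply: xget_unique => [|k]; rewrite /= choice.pickleK //=.
by move/eqP.
Qed.

Lemma finite_family_selectors (T : choiceType) (S : nat -> set T) :
  (forall n, finite_set (S n)) -> (forall n, S n !=set0) ->
  exists x : nat -> (nat -> bool) -> T, (forall n i, S n (x n i)) /\
    forall g, exists i, forall n, S n (g n) -> x n i = g n.
Proof.
move=> finS /choice [d dS].
have [s sE] := choice (fun n => (finite_seqP _).1 (finS n)).
exists (fun n i => nth (d n) (s n) (decode i n)); split.
  move=> n i; have [ltis|leis] := ltnP (decode i n) (size (s n)).
    by rewrite sE; exact: mem_nth.
  by rewrite nth_default.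
move=> g; have [i ig] := decode_surj (fun n => index (g n) (s n)).
by exists i => n; rewrite ig sE => gS; rewrite nth_index.
Qed.

Section vietoris_pullback.
Variables (X : topologicalType) (F : nat -> CL X).
Variable x : nat -> {ptws (nat -> bool) -> X}.
Hypothesis x_in : forall n i, (F n : set X) (x n i).
Hypothesis x_onto :
  forall g, exists i, forall n, (F n : set X) (g n) -> x n i = g n.
Variables (q : {ptws (nat -> bool) -> X}) (G : CL X).
Hypothesis G_closure : (G : set X) = closure (range q).

Lemma near_vietoris_subbase (t : vietoris_index X) :
  vietoris_dom t -> vietoris_subbase t G ->
  \forall f \near q, forall n, f = x n -> vietoris_subbase t (F n).
Proof.
case: t => -[] A /= oA GA.
  (* coordinate [i] picks in each [F n] a point outside [A] when there is one *)
  pose g n := if pselect (exists2 y, (F n : set X) y & ~ A y) is left h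
    then projT1 (cid2 h) else x n (fun=> true).
  have [i xg] := x_onto g.
  have qiA : A (q i).
    by apply: GA; rewrite G_closure; apply: subset_closure; exists i.
  apply: filterS (nbhs_ptws_coord oA qiA) => f /= Afi n fx y Fny.
  apply: contrapT => nAy; rewrite fx /g in Afi xg.
  move: (xg n) Afi; case: pselect => [h|]; last by case; exists y.
  by case: (cid2 h) => z /= Fnz nAz /(_ Fnz) ->.
case: GA => z []; rewrite G_closure => clz Az.
have [_ [[i _ <-] Aqi]] := clz A (open_nbhs_nbhs (conj oA Az)).
apply: filterS (nbhs_ptws_coord oA Aqi) => f /= Afi n fx.
by exists (x n i); split; [exact: x_in | rewrite -fx].
Qed.

Lemma near_vietoris_nbhs (V : set (CL X)) : nbhs G V ->
  \forall f \near q, forall n, f = x n -> V (F n).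
Proof.
move=> /nbhs_CL_subbase [fs [fs_dom fs_G fs_V]].
have W := @filter_bigI _ _ fs (fun t => [set f | forall n, f = x n ->
  vietoris_subbase t (F n)]) _ (nbhs_filter q)
  (fun t tfs => near_vietoris_subbase (fs_dom t tfs) (fs_G t tfs)).
by apply: filterS W => f Wf n fx; apply: fs_V => t tfs; exact: Wf t tfs n fx.
Qed.

End vietoris_pullback.

Lemma rel_countably_compact_fin_nonempty_subsets (X : topologicalType)
    (D : set X) :
  hausdorff_space X -> rel_countably_compact (power_set_c D) ->
  rel_countably_compact (fin_nonempty_subsets D).
Proof.
move=> hX rccD Z ZD /card_eq_nat_enum [F F_inj ZF].
have FD n : fin_nonempty_subsets D (F n) := ZD _ (ZF n).
have [x [x_in x_onto]] := finite_family_selectors (S := fun n => F n : set X)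
  (fun n => (FD n).1) (fun n => (CLsetP (F n)).2).
pose xp : nat -> {ptws (nat -> bool) -> X} := x.
have range_x n : range (x n) = F n.
  apply/seteqP; split => [_ [i _ <-] //|y Fny].
  by have [i xi] := x_onto (fun=> y); exists i => //; apply: xi.
have xp_inj : injective xp.
  move=> m n /(congr1 (fun f => range f)).
  by rewrite !range_x => /CLset_inj/F_inj.
have range_xpD : range xp `<=` power_set_c D.
  by move=> _ [n _ <-] i; apply: (FD n).2.
have [q q_lim] := rccD _ range_xpD (inj_card_eq (fun m n _ _ => @xp_inj m n)).
have G_CL : closed (closure (range q)) /\ closure (range q) !=set0.
  split; first exact: closed_closure.
  by exists (q (fun=> true)); apply: subset_closure; exists (fun=> true).
pose G := MkCL G_CL.
have [N FN] : exists N, forall n, (N <= n)%N -> F n != G.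
  have [[m Fm]|nFG] := pselect (exists m, F m = G); last first.
    by exists 0%N => n _; apply/eqP => Fn; apply: nFG; exists n.
  exists m.+1 => n mn; apply/eqP => Fn.
  by move: mn; rewrite (F_inj n m) ?ltnn // Fn Fm.
have T1 : accessible_space {ptws (nat -> bool) -> X}.
  exact/hausdorff_accessible/hausdorff_product.
exists G => V /(near_vietoris_nbhs x_in x_onto (G := G) erefl) W.
have [k kN Wk] := limit_point_range_tail N T1 q_lim W.
by exists (F k); split; [exact: FN | exact: ZF | exact: Wk].
Qed.

Theorem theorem3p2 (X : topologicalType) (D : set X) :
  hausdorff_space X -> dense D ->
  rel_countably_compact (power_set_c D) ->
  rel_countably_compact (fin_nonempty_subsets D) /\ pseudocompact (CL X).
Proof.
move=> hX dD rccD.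
have T1 := hausdorff_accessible hX.
have rcc_fin := rel_countably_compact_fin_nonempty_subsets hX rccD.
split => //; apply: dense_rel_countably_compact_pseudocompact rcc_fin.
- exact: accessible_CL.
- exact: dense_fin_nonempty_subsets.
Qed.
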